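(* For the $N$-relay 1-2-1 diamond network with relays operating in HD, writing $\ell_i=\ell_{i,0}$ and $r_i=\ell_{N+1,i}$, $\mathsf{C}_{\rm cs,iid}$ (HD states) equals the optimal value of the linear program in variables $\lambda_{\ell_i},\lambda_{r_i}$ ($i\in[1:N]$): $$\max\sum_{i=1}^N\lambda_{\ell_i}\ell_i\ \text{ s.t. }\ \lambda_{\ell_i}\ell_i=\lambda_{r_i}r_i\ \forall i;\quad \sum_{i=1}^N\lambda_{\ell_i}\le1;\quad\sum_{i=1}^N\lambda_{r_i}\le1;\quad \lambda_{\ell_i}+\lambda_{r_i}\le1\ \forall i;\quad \lambda_{\ell_i},\lambda_{r_i}\ge0\ \forall i.$$
   Context: Diamond network: nodes $[0:N+1]$, source $0$, destination $N+1$, relays $[1:N]$; the only links are $(0,i)$ and $(i,N+1)$ for $i\in[1:N]$, with positive capacities $\ell_{i,0}$ and $\ell_{N+1,i}$; all other $\ell_{j,i}=0$. HD network states: a state $s$ consists of sets $s_{i,t}\subseteq[1:N+1]\setminus\{i\}$ and $s_{i,r}\subseteq[0:N]\setminus\{i\}$, each of cardinality at most $1$, for $i\in[0:N+1]$, with $s_{0,r}=s_{N+1,t}=\emptyset$ and $|s_{i,t}|+|s_{i,r}|\le1$ for $i\in[1:N]$; $\mathcal S$ is the set of all such states. Link $(i,j)$ is active in $s$ if $j\in s_{i,t}$ and $i\in s_{j,r}$. $\mathsf{C}_{\rm cs,iid}=\max_{\lambda}\min_{\Omega}\sum_{i\in\Omega,\ j\in\Omega^c}\big(\sum_{s\in\mathcal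 S:\ (i,j)\text{ active in }s}\lambda_s\big)\ell_{j,i}$, maximum over probability vectors $(\lambda_s)_{s\in\mathcal S}$, minimum over $\Omega$ with $0\in\Omega\subseteq[0:N]$, $\Omega^c=[0:N+1]\setminus\Omega$. *)

From HB Require Import structures.
From mathcomp Require Import all_boot all_order all_algebra.
Set Implicit Arguments. Unset Strict Implicit. Unset Printing Implicit Defensive.
Import Order.TTheory GRing.Theory Num.Theory.
Local Open Scope ring_scope.

Definition node (N : nat) := 'I_N.+2.
Definition src {N : nat} : node N := ord0.
Definition dst {N : nat} : node N := ord_max.
Definition relay {N : nat} (k : 'I_N) : node N :=
  @Ordinal N.+2 k.+1 (leq_trans (ltn_ord k) (leqnSn N.+1)).

Definition state (N : nat) : finType :=
  ({ffun node N -> {set node N}} * {ffun node N -> {set node N}})%type.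
Definition st {N} (s : state N) (i : node N) : {set node N} := s.1 i.
Definition sr {N} (s : state N) (i : node N) : {set node N} := s.2 i.

Definition is_relay {N} (i : node N) : bool := (i != src) && (i != dst).

Definition valid_state {N} (s : state N) : bool :=
  [forall i : node N,
    [&& (#|st s i| <= 1)%N, (#|sr s i| <= 1)%N,
        i \notin st s i, src \notin st s i,
        i \notin sr s i, dst \notin sr s i &
        is_relay i ==> (#|st s i| + #|sr s i| <= 1)%N]]
  && (sr s src == set0) && (st s dst == set0).

Definition active {N} (s : state N) (i j : node N) : bool :=
  (j \in st s i) && (i \in sr s j).

(* ell j i = capacity of link (i,j): ell_{k,0} = lcap, ell_{N+1,k} = rcap *)
Definition ell {R : realFieldType} {N} (lcap rcap : 'I_N -> R) (j i : node N) : R :=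
  \sum_(k < N) ((if (i == src) && (j == relay k) then lcap k else 0)
              + (if (i == relay k) && (j == dst) then rcap k else 0)).

Definition prob_vec {R : realFieldType} {N} (lam : state N -> R) : Prop :=
  (forall s, 0 <= lam s) /\ \sum_(s : state N | valid_state s) lam s = 1.

Definition is_cut {N} (Om : {set node N}) : bool := (src \in Om) && (dst \notin Om).

Definition cut_value {R : realFieldType} {N} (lcap rcap : 'I_N -> R)
    (lam : state N -> R) (Om : {set node N}) : R :=
  \sum_(i in Om) \sum_(j in ~: Om)
     (\sum_(s : state N | valid_state s && active s i j) lam s) * ell lcap rcap j i.

Definition is_min_cut_value {R : realFieldType} {N} (lcap rcap : 'I_N -> R)
    (lam : state N -> R) (c : R) : Prop :=
  (exists Om, is_cut Om /\ c = cut_value lcap rcap lam Om) /\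
  (forall Om, is_cut Om -> c <= cut_value lcap rcap lam Om).

Definition cs_values {R : realFieldType} {N} (lcap rcap : 'I_N -> R) (c : R) : Prop :=
  exists lam : state N -> R, prob_vec lam /\ is_min_cut_value lcap rcap lam c.

Definition is_max {R : realFieldType} (P : R -> Prop) (c : R) : Prop :=
  P c /\ forall x, P x -> x <= c.

(* C_cs,iid is the value c with is_max (cs_values lcap rcap) c. *)

Definition lp_feasible {R : realFieldType} {N} (lcap rcap : 'I_N -> R)
    (xl xr : 'I_N -> R) : Prop :=
  (forall i, xl i * lcap i = xr i * rcap i) /\
  \sum_(i < N) xl i <= 1 /\ \sum_(i < N) xr i <= 1 /\
  (forall i, xl i + xr i <= 1) /\
  (forall i, 0 <= xl i /\ 0 <= xr i).

Definition lp_values {R : realFieldType} {N} (lcap rcap : 'I_N -> R) (c : R) : Prop :=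
  exists xl xr, lp_feasible lcap rcap xl xr /\ c = \sum_(i < N) xl i * lcap i.

(* Work with the per-relay rates t k = lambda_l k * lcap k = lambda_r k * rcap k.
   Any schedule gives activity fractions X k, Y k of the links into and out of relay k
   which satisfy the LP constraints, and the cut that puts relay k on the source side
   exactly when its outgoing link is the bottleneck has value
   \sum_k min (X k * lcap k) (Y k * rcap k), a feasible LP value.  Conversely, a
   feasible rate vector is realised by a distribution over the states "source sends to
   relay a, relay b sends to the destination" (a <> b) whose marginals are t k / lcap k
   and t k / rcap k; such a distribution is built by inserting the relays one at a time.
   Then every cut has value \sum_k t k.  Finally the LP attains its maximum, at a
   vertex of its bounded feasible polyhedron. *)

From HB Require Import structures.
From mathcomp Require Import all_boot all_order all_algebra.
From mathcomp Require Import ring lra.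
From Stdlib Require Import Classical.
Set Implicit Arguments. Unset Strict Implicit. Unset Printing Implicit Defensive.
Import Order.TTheory GRing.Theory Num.Theory.
Local Open Scope ring_scope.

Definition dot {R : realFieldType} {V : finType} (a x : V -> R) : R := \sum_v a v * x v.

Lemma dotDZ (R : realFieldType) (V : finType) (a x e : V -> R) (t : R) :
  dot a (fun v => x v + t * e v) = dot a x + t * dot a e.
Proof. by rewrite /dot mulr_sumr -big_split /=; apply: eq_bigr => v _; ring. Qed.

Section LinearProgram.

Variables (R : realFieldType) (V C : finType).
Variables (a : C -> V -> R) (b : C -> R) (f : V -> R).

Definition feasible (x : V -> R) := forall c, dot (a c) x <= b c.
Definition tight (E : {set C}) (x : V -> R) := forall c, c \in E -> dot (a c) x = b c.
Definition rigid (E : {set C}) :=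
  forall e : V -> R, (forall c, c \in E -> dot (a c) e = 0) -> forall v, e v = 0.

Hypothesis bounded : forall e : V -> R, (forall c, dot (a c) e <= 0) -> forall v, e v = 0.

Lemma rigid_tight_eq E x y : rigid E -> tight E x -> tight E y -> forall v, x v = y v.
Proof.
move=> rE tx ty v; suff: x v + -1 * y v = 0 by lra.
by apply: (rE (fun v => x v + -1 * y v)) => c cE; rewrite dotDZ tx // ty //; ring.
Qed.

Lemma not_rigid_improving E : ~ rigid E ->
  exists e : V -> R, [/\ forall c, c \in E -> dot (a c) e = 0, 0 <= dot f e &
    exists c, 0 < dot (a c) e].
Proof.
move=> /not_all_ex_not [e ne]; have [e0 /not_all_ex_not [v ev]] := imply_to_and _ _ ne.
have up (d : V -> R) : d v != 0 -> exists c, 0 < dot (a c) d.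
  move=> dv; apply: NNPP => no_c; move: dv; rewrite (bounded (e:=d)) ?eqxx //.
  by move=> c; rewrite leNgt; apply/negP => pos; apply: no_c; exists c.
have [fe|fe] := lerP 0 (dot f e); first by exists e; split => //; apply: up; apply/eqP.
have dotN g : dot g (fun w => 0 + -1 * e w) = - dot g e.
  by rewrite dotDZ /dot big1 => [|w _]; rewrite ?mulr0; ring.
exists (fun w => 0 + -1 * e w); split.
- by move=> c cE; rewrite dotN e0 ?oppr0.
- by rewrite dotN; lra.
- by apply: up; rewrite add0r mulN1r oppr_eq0; apply/eqP.
Qed.

Lemma push_to_larger_face E y e :
  feasible y -> tight E y -> (forall c, c \in E -> dot (a c) e = 0) ->
  0 <= dot f e -> (exists c, 0 < dot (a c) e) ->
  exists2 c, c \notin E &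
    exists y', [/\ feasible y', tight (c |: E) y' & dot f y <= dot f y'].
Proof.
move=> fy ty e0 fe [c0 pos0].
pose step c := (b c - dot (a c) y) / dot (a c) e.
have [c1 pos1 minc1] := @arg_minP _ R C c0 (fun c => 0 < dot (a c) e) step pos0.
have t_ge0 : 0 <= step c1 by rewrite divr_ge0 ?subr_ge0 ?fy ?ltW.
exists c1; first by apply: contraTN pos1 => /e0 ->; rewrite ltxx.
exists (fun v => y v + step c1 * e v); split; last by rewrite dotDZ lerDl mulr_ge0.
- move=> c; rewrite dotDZ; have [posc|] := ltP 0 (dot (a c) e).
    by have := minc1 c posc; rewrite /step ler_pdivlMr //; move: (step c1) => t; lra.
  by move=> nposc; have := fy c; have := mulr_ge0_le0 t_ge0 nposc; lra.
- move=> c; rewrite in_setU1 => /orP [/eqP -> | cE]; last by rewrite dotDZ e0 // mulr0 addr0 ty.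
  by rewrite dotDZ /step divfK ?lt0r_neq0 //; ring.
Qed.

Lemma feasible_below_vertex y E : feasible y -> tight E y ->
  exists E' x, [/\ rigid E', feasible x, tight E' x & dot f y <= dot f x].
Proof.
have [n] := ubnP #|~: E|; elim: n => // n IHn in y E *; rewrite ltnS => lenE fy ty.
have [rE|nrE] := classic (rigid E); first by exists E, y.
have [e [e0 fe pos]] := not_rigid_improving nrE.
have [c cE [y' [fy' ty' yy']]] := push_to_larger_face fy ty e0 fe pos.
have [|E' [x [rE' fx tx y'x]]] := IHn y' (c |: E) _ fy' ty'.
  apply: leq_trans lenE; by rewrite setCU setIC -setDE proper_card // properD1 // inE.
by exists E', x; split => //; apply: le_trans y'x.
Qed.

(* Rigid faces carry at most one feasible point, so finitely many candidates suffice. *)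
Lemma lp_optimum_exists x0 : feasible x0 ->
  exists2 x, feasible x & forall y, feasible y -> dot f y <= dot f x.
Proof.
move=> fx0.
have /fin_all_exists [g gP] : forall E : {set C}, exists z : V -> R,
    (exists x, feasible x /\ tight E x) -> feasible z /\ tight E z.
  move=> E; have [[x fx]|nx] := classic (exists x, feasible x /\ tight E x).
    by exists x.
  by exists x0.
pose cand E := [forall c, dot (a c) (g E) <= b c] && [forall c in E, dot (a c) (g E) == b c].
have candP E : cand E <-> feasible (g E) /\ tight E (g E).
  split; first by case/andP => /forallP h /forall_inP h'; split => [c|c /h'/eqP].
  by case=> fg tg; apply/andP; split; [apply/forallP | apply/forall_inP => c /tg ->].
have vertex_cand y : feasible y -> exists2 E, cand E & dot f y <= dot f (g E).
  move=> fy; have [|E [x [rE fx tx yx]]] := feasible_below_vertex (E:=set0) fy.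
    by move=> c; rewrite inE.
  have [fgE tgE] := gP E (ex_intro _ x (conj fx tx)).
  exists E; first exact/candP.
  suff -> : dot f (g E) = dot f x by [].
  by apply: eq_bigr => v _; rewrite (rigid_tight_eq rE tx tgE).
have [E0 cE0 _] := vertex_cand x0 fx0.
have [Em /candP [fm _] maxEm] := @arg_maxP _ R _ E0 cand (fun E => dot f (g E)) cE0.
exists (g Em) => // y /vertex_cand [E cE yE]; exact: le_trans yE (maxEm E cE).
Qed.

End LinearProgram.

Lemma sumr_option (R : nmodType) (T : finType) (F : option T -> R) :
  \sum_o F o = F None + \sum_t F (Some t).
Proof.
have -> : index_enum (option T) = None :: map Some (index_enum T).
  by rewrite /index_enum !unlock /= /option_enum !unlock.
by rewrite big_cons big_map.
Qed.

Lemma sumr_if_eq (R : zmodType) (I : finType) (j : I) (c : R) (g : I -> R) :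
  \sum_i (if i == j then c else g i) = c + \sum_i g i - g j.
Proof.
rewrite (bigD1 j) // [in RHS](bigD1 j) //= eqxx [g j + _]addrC addrA addrK.
by congr (_ + _); apply: eq_bigr => i /negbTE ->.
Qed.

Lemma sumr_sub_le (R : realDomainType) (I : finType) (A : pred I) (F : I -> R) :
  (forall i, 0 <= F i) -> \sum_(i in A) F i <= \sum_i F i.
Proof. by move=> F_ge0; rewrite [leRHS](bigID A) lerDl sumr_ge0. Qed.

Lemma sum_single (R : nmodType) (I : finType) (A : pred I) (i0 : I) (F : I -> R) :
  (forall i, i != i0 -> F i = 0) -> \sum_(i in A) F i = if i0 \in A then F i0 else 0.
Proof.
move=> F0; have [Ai0|nAi0] := boolP (i0 \in A).
  by rewrite (bigD1 i0) //= big1 ?addr0 // => i /andP [_]; apply: F0.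
by apply: big1 => i Ai; apply: F0; apply: contraNneq nAi0 => <-.
Qed.

Lemma fraction_of (R : realFieldType) (s p : R) :
  0 <= s -> s <= p -> exists2 t : R, 0 <= t <= 1 & t * p = s.
Proof.
move=> s_ge0 sp; have [p0|p_neq0] := eqVneq p 0.
  by exists 0; rewrite ?lexx ?ler01 // mul0r; move: sp; rewrite p0; lra.
have p_gt0 : 0 < p by rewrite lt0r p_neq0 (le_trans s_ge0).
by exists (s / p); rewrite ?divfK // divr_ge0 ?ler_pdivrMr ?mul1r ?(ltW p_gt0).
Qed.

(* How much of the new relay's source mass [al] and destination mass [be] is
   taken from the idle slot of mass [z]; the rest comes from the slots where only
   the destination (mass [p]), resp. only the source (mass [q]), is busy. *)
Lemma insertion_split (R : realFieldType) (u w X Y z p q : R) :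
  0 <= u -> 0 <= w -> u + w <= 1 -> X + u <= 1 -> Y + w <= 1 -> 0 <= z ->
  0 <= p -> 0 <= q -> p = 1 - X - z -> q = 1 - Y - z -> z = 0 \/ z = 1 - (X + Y) ->
  exists al be : R, [/\ 0 <= al <= u, 0 <= be <= w, u - al <= p, w - be <= q & al + be <= z]
    /\ (z - al - be = 0 \/ z - al - be = 1 - (X + u + (Y + w))).
Proof.
move=> u0 w0 uw Xu Yw z0 p0 q0 pE qE z01.
pose b0 := if 0 <= w - q then w - q else 0.
pose al := if u <= z - b0 then u else z - b0.
exists al, (if w <= z - al then w else z - al); rewrite /al /b0.
case: (lerP 0 (w - q)) => h1; case: (lerP u _) => h2; case: (lerP w _) => h3;
  (split; [split|]); try lra; case: z01 => z01; try (left; lra); try (right; lra).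
Qed.

Section ZeroDiagonalCoupling.

Variables (R : realFieldType) (N : nat) (x y : 'I_N -> R).
Hypotheses (x_ge0 : forall k, 0 <= x k) (y_ge0 : forall k, 0 <= y k).
Hypotheses (sum_x_le1 : \sum_k x k <= 1) (sum_y_le1 : \sum_k y k <= 1).
Hypothesis xy_le1 : forall k, x k + y k <= 1.

(* [mu a b]: probability that the source serves [a] and the destination serves [b]
   ([None] = idle); only the relays in [S] are scheduled so far.  The last clause
   says that the idle slot is empty or that no relay-to-relay pair is used, which
   leaves room to schedule one more relay. *)
Definition partial_coupling (S : {set 'I_N}) (mu : option 'I_N -> option 'I_N -> R) :=
  [/\ forall a b, 0 <= mu a b, forall k, mu (Some k) (Some k) = 0,
      \sum_a \sum_b mu a b = 1,
      forall k, \sum_b mu (Some k) b = (if k \in S then x k else 0) /\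
                \sum_a mu a (Some k) = (if k \in S then y k else 0) &
      mu None None = 0 \/ mu None None = 1 - \sum_(k in S) (x k + y k)].

Lemma partial_coupling0 :
  partial_coupling set0 (fun a b => if (a, b) is (None, None) then 1 else 0).
Proof.
split=> [[?|] [?|] | k | | k |] //=; rewrite ?sumr_option ?big1 ?addr0 ?inE //.
- by right; rewrite subr0.
- by move=> k; rewrite inE.
Qed.

Section Insertion.

Variables (j : 'I_N) (mu : option 'I_N -> option 'I_N -> R) (al be tp tq : R).
Hypotheses (mu_row_j : forall b, mu (Some j) b = 0) (mu_col_j : forall a, mu a (Some j) = 0).

(* The idle slot gives [al] to [(j, None)] and [be] to [(None, j)]; a fraction [tp]
   of each [(None, l)] moves to [(j, l)] and a fraction [tq] of each [(k, None)]
   moves to [(k, j)], so all other marginals are unchanged. *)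
Definition insert_relay (a b : option 'I_N) : R :=
  match a, b with
  | None, None => mu None None - al - be
  | Some k, None => if k == j then al else (1 - tq) * mu a None
  | None, Some l => if l == j then be else (1 - tp) * mu None b
  | Some k, Some l => if k == j then tp * mu None b else if l == j then tq * mu a None else mu a b
  end.

Lemma insert_relay_row k : \sum_b insert_relay (Some k) b =
  if k == j then al + tp * \sum_l mu None (Some l) else \sum_b mu (Some k) b.
Proof.
rewrite sumr_option /=; case: eqP => [_|_]; first by rewrite mulr_sumr.
by rewrite sumr_if_eq mu_col_j sumr_option; ring.
Qed.

Lemma insert_relay_col l : \sum_a insert_relay a (Some l) =
  if l == j then be + tq * \sum_k mu (Some k) None else \sum_a mu a (Some l).
Proof.
rewrite sumr_option /=; case: eqP => [->|_].
  rewrite (eq_bigr (fun k => if k == j then 0 else tq * mu (Some k) None)).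
    by rewrite sumr_if_eq mu_row_j mulr_sumr; ring.
  by move=> k _; case: eqP => _; rewrite ?mu_col_j ?mulr0 ?eqxx.
by rewrite sumr_if_eq mu_row_j sumr_option; ring.
Qed.

Lemma insert_relay_none_row : \sum_b insert_relay None b =
  mu None None - al + (1 - tp) * \sum_l mu None (Some l).
Proof. by rewrite sumr_option /= sumr_if_eq mu_col_j mulr_sumr; ring. Qed.

End Insertion.

Lemma partial_coupling_unscheduled S mu j : partial_coupling S mu -> j \notin S ->
  (forall b, mu (Some j) b = 0) /\ (forall a, mu a (Some j) = 0).
Proof.
move=> [mu_ge0 _ _ mu_marg _] jS; have [row_j col_j] := mu_marg j.
rewrite (negbTE jS) in row_j col_j.
by split=> [b|a]; [apply: (psumr_eq0P _ row_j) | apply: (psumr_eq0P _ col_j)].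
Qed.

Lemma partial_coupling_scheduled S mu : partial_coupling S mu ->
  \sum_k \sum_b mu (Some k) b = \sum_(k in S) x k /\
  \sum_k \sum_a mu a (Some k) = \sum_(k in S) y k.
Proof.
move=> [_ _ _ mu_marg _]; rewrite [\sum_(k in S) x k]big_mkcond [\sum_(k in S) y k]big_mkcond.
by split; apply: eq_bigr => k _; rewrite ?(proj1 (mu_marg k)) ?(proj2 (mu_marg k)).
Qed.

Lemma partial_coupling_idle S mu : partial_coupling S mu ->
  \sum_l mu None (Some l) = 1 - \sum_(k in S) x k - mu None None /\
  \sum_k mu (Some k) None = 1 - \sum_(k in S) y k - mu None None.
Proof.
move=> pc; have [_ _ mu_sum1 _ _] := pc; have [rows cols] := partial_coupling_scheduled pc.
split; move: mu_sum1; first rewrite sumr_option sumr_option rows.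
  by move: (\sum_l _) (\sum_(k in S) _) => ??; lra.
rewrite exchange_big sumr_option sumr_option cols.
by move: (\sum_l _) (\sum_(k in S) _) => ??; lra.
Qed.

Lemma partial_coupling_insert (S : {set 'I_N}) j mu : j \notin S -> partial_coupling S mu ->
  exists mu', partial_coupling (j |: S) mu'.
Proof.
move=> jS pc; have [mu_ge0 mu_diag _ mu_marg mu_z] := pc.
have [mu_row_j mu_col_j] := partial_coupling_unscheduled pc jS.
have [rowsX _] := partial_coupling_scheduled pc.
have [pE qE] := partial_coupling_idle pc.
set z := mu None None in mu_z pE qE *.
set p := \sum_l mu None (Some l) in pE *; set q := \sum_k mu (Some k) None in qE *.
set X := \sum_(k in S) x k in rowsX pE *; set Y := \sum_(k in S) y k in qE *.
have Xu : X + x j <= 1.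
  by rewrite addrC -big_setU1 //=; apply: le_trans sum_x_le1; apply: sumr_sub_le.
have Yw : Y + y j <= 1.
  by rewrite addrC -big_setU1 //=; apply: le_trans sum_y_le1; apply: sumr_sub_le.
have p_ge0 : 0 <= p by apply: sumr_ge0.
have q_ge0 : 0 <= q by apply: sumr_ge0.
have z01 : z = 0 \/ z = 1 - (X + Y) by move: mu_z; rewrite big_split.
have [al [be [[/andP [al_ge0 al_le] /andP [be_ge0 be_le] alp beq albe] z']]] :=
  insertion_split (x_ge0 j) (y_ge0 j) (xy_le1 j) Xu Yw (mu_ge0 _ _) p_ge0 q_ge0 pE qE z01.
have [tp /andP [tp_ge0 tp_le1] tpp] : exists2 tp : R, 0 <= tp <= 1 & tp * p = x j - al.
  by apply: fraction_of; lra.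
have [tq /andP [tq_ge0 tq_le1] tqq] : exists2 tq : R, 0 <= tq <= 1 & tq * q = y j - be.
  by apply: fraction_of; lra.
exists (insert_relay j mu al be tp tq); split.
- have ge0 (t : R) : 0 <= t <= 1 -> 0 <= 1 - t by move=> /andP []; lra.
  by move=> [k|] [l|] /=; do ?case: eqP => _;
    rewrite ?mulr_ge0 ?ge0 ?tp_ge0 ?tp_le1 ?tq_ge0 ?tq_le1 //; lra.
- by move=> k /=; case: eqP => [->|_]; rewrite ?mu_col_j ?mulr0.
- rewrite sumr_option insert_relay_none_row // -/p.
  rewrite [X in _ + X = 1](eq_bigr (fun k => if k == j then al + tp * p else \sum_b mu (Some k) b)).
    by rewrite sumr_if_eq rowsX big1 // mulrBl mul1r -/z; move: tpp pE; lra.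
  by move=> k _; rewrite insert_relay_row.
- move=> k; rewrite insert_relay_row // insert_relay_col // !inE -/p -/q.
  by case: eqP => [->|_] /=; [rewrite tpp tqq; split; ring | exact: mu_marg].
- rewrite /= big_setU1 //= big_split /= -/X -/Y.
  by case: z' => ->; [left | right; ring].
Qed.

Lemma zero_diagonal_coupling : exists mu : option 'I_N -> option 'I_N -> R,
  [/\ forall a b, 0 <= mu a b, forall k, mu (Some k) (Some k) = 0,
      \sum_a \sum_b mu a b = 1 &
      forall k, \sum_b mu (Some k) b = x k /\ \sum_a mu a (Some k) = y k].
Proof.
suff [mu [mu_ge0 mu_diag mu_tot mu_marg _]] : exists mu, partial_coupling setT mu.
  by exists mu; split => // k; have := mu_marg k; rewrite inE.
have [n] := ubnP #|[set: 'I_N]|; elim: n [set: 'I_N] => // n IHn S; rewrite ltnS => leSn.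
have [->|[j jS]] := set_0Vmem S; first by eexists; apply: partial_coupling0.
have [|mu pc] := IHn (S :\ j); first exact: leq_trans (proper_card (properD1 jS)) leSn.
by rewrite -(setD1K jS); apply: partial_coupling_insert pc; rewrite setD11.
Qed.

End ZeroDiagonalCoupling.

Section Diamond.

Variables (R : realFieldType) (N : nat).
Implicit Types (k l : 'I_N) (a b : option 'I_N) (lam : state N -> R).

Lemma relay_eq_src k : (relay k == src) = false. Proof. by rewrite -val_eqE. Qed.
Lemma src_eq_relay k : (src == relay k) = false. Proof. by rewrite -val_eqE. Qed.
Lemma relay_eq_dst k : (relay k == dst) = false.
Proof. by rewrite -val_eqE /= eqSS ltn_eqF. Qed.
Lemma dst_eq_relay k : (dst == relay k) = false. Proof. by rewrite eq_sym relay_eq_dst. Qed.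
Lemma src_eq_dst : (@src N == dst) = false. Proof. by rewrite -val_eqE. Qed.
Lemma dst_eq_src : (@dst N == src) = false. Proof. by rewrite -val_eqE. Qed.
Lemma relay_eq k l : (relay k == relay l) = (k == l). Proof. by rewrite -!val_eqE. Qed.

Lemma relay_inj : injective (@relay N).
Proof. by move=> k l /eqP; rewrite relay_eq => /eqP. Qed.

Definition node_eqE :=
  (relay_eq_src, src_eq_relay, relay_eq_dst, dst_eq_relay, src_eq_dst, dst_eq_src, relay_eq, eqxx).

Lemma relay_is_relay k : is_relay (relay k).
Proof. by rewrite /is_relay !node_eqE. Qed.

(* The state in which the source transmits to relay [a] and the destination
   listens to relay [b] ([None]: that end is silent). *)
Definition diamond_state a b : state N :=
  ([ffun i => if i == src then (if a is Some k then [set relay k] else set0)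
              else if b is Some k then (if i == relay k then [set dst] else set0) else set0],
   [ffun i => if i == dst then (if b is Some k then [set relay k] else set0)
              else if a is Some k then (if i == relay k then [set src] else set0) else set0]).

Lemma diamond_state_valid a b : (a == None) || (a != b) -> valid_state (diamond_state a b).
Proof.
move=> ab; rewrite /valid_state -andbA; apply/and3P; split; rewrite /st /sr ?ffunE ?node_eqE //=; last first.
- by case: a ab => [k|]; case: b => [l|]; rewrite ?node_eqE.
- by case: a ab => [k|]; case: b => [l|]; rewrite ?node_eqE.
apply/forallP => i; rewrite !ffunE /is_relay.
have [->|i_src] := eqVneq i src.
  by case: a ab => [k|]; case: b => [l|] //= _; rewrite ?node_eqE ?cards1 ?cards0 ?inE ?node_eqE.
have [->|i_dst] := eqVneq i dst.
  by case: a ab => [k|]; case: b => [l|] //= _; rewrite ?node_eqE ?cards1 ?cards0 ?inE ?node_eqE.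
case: a ab => [k|]; case: b => [l|] //= ab;
  try (have kl : (k == l) = false by apply: contraNF ab => /eqP ->);
  try have [->|ik] := eqVneq i (relay k); try have [->|il] := eqVneq i (relay l);
  do 2 rewrite ?(negbTE ik) ?(negbTE il) ?node_eqE ?kl ?cards1 ?cards0 ?inE //.
Qed.

Lemma active_src_relay a b k : active (diamond_state a b) src (relay k) = (a == Some k).
Proof.
rewrite /active /st /sr !ffunE !node_eqE.
case: a => [l|] /=; rewrite ?inE ?node_eqE //.
by case: eqP => [->|kl]; rewrite ?inE ?eqxx //; apply/esym/eqP => -[lk]; exact: kl (esym lk).
Qed.

Lemma active_relay_dst a b k : active (diamond_state a b) (relay k) dst = (b == Some k).
Proof.
rewrite /active /st /sr !ffunE !node_eqE.
case: b => [l|] /=; rewrite ?inE ?node_eqE //.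
by case: eqP => [->|kl]; rewrite ?inE ?eqxx //; apply/esym/eqP => -[lk]; exact: kl (esym lk).
Qed.

Definition link_activity lam (i j : node N) : R :=
  \sum_(s : state N | valid_state s && active s i j) lam s.

(* Only the links [src -> relay k] and [relay k -> dst] have capacity, and each
   crosses the cut exactly when [relay k] is on the corresponding side. *)
Lemma cut_value_diamond (lcap rcap : 'I_N -> R) lam (Om : {set node N}) : is_cut Om ->
  cut_value lcap rcap lam Om =
  \sum_k (if relay k \in Om then link_activity lam (relay k) dst * rcap k
          else link_activity lam src (relay k) * lcap k).
Proof.
case/andP => src_in dst_out; rewrite /cut_value /ell.
under eq_bigr do under eq_bigr do rewrite mulr_sumr.
under eq_bigr do rewrite exchange_big.
rewrite exchange_big /=; apply: eq_bigr => k _.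
under eq_bigr do under eq_bigr do rewrite mulrDr.
under eq_bigr do rewrite big_split.
rewrite big_split /=.
rewrite (@sum_single _ _ (mem Om) src); last first.
  by move=> i /negbTE i_src; apply: big1 => j _; rewrite i_src mulr0.
rewrite (@sum_single _ _ (mem Om) (relay k) (fun i => \sum_(j in ~: Om) _)); last first.
  by move=> i /negbTE i_k; apply: big1 => j _; rewrite i_k mulr0.
rewrite (@sum_single _ _ (mem (~: Om)) (relay k)); last first.
  by move=> j /negbTE j_k; rewrite eqxx j_k mulr0.
rewrite (@sum_single _ _ (mem (~: Om)) dst); last first.
  by move=> j /negbTE j_dst; rewrite j_dst andbF mulr0.
rewrite !inE src_in dst_out /= !eqxx /link_activity.
by case: (relay k \in Om); rewrite ?add0r ?addr0.
Qed.

Lemma valid_stateP (s : state N) i : valid_state s ->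
  [/\ (#|st s i| <= 1)%N, (#|sr s i| <= 1)%N & is_relay i -> (#|st s i| + #|sr s i| <= 1)%N].
Proof.
case/andP => /andP [/forallP valid _] _.
by case/and3P: (valid i) => st1 sr1 /and5P [_ _ _ _ /implyP].
Qed.

Lemma link_activity_feasible lam : prob_vec lam ->
  [/\ forall k, 0 <= link_activity lam src (relay k),
      forall k, 0 <= link_activity lam (relay k) dst,
      \sum_k link_activity lam src (relay k) <= 1,
      \sum_k link_activity lam (relay k) dst <= 1 &
      forall k, link_activity lam src (relay k) + link_activity lam (relay k) dst <= 1].
Proof.
move=> [lam_ge0 lam_sum1].
have activityE i j : link_activity lam i j =
    \sum_(s | valid_state s) (if active s i j then lam s else 0).
  by rewrite /link_activity big_mkcondr.
have at_most_one (s : state N) (P : pred 'I_N) : (forall k l, P k -> P l -> k = l) ->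
    \sum_k (if P k then lam s else 0) <= lam s.
  move=> P1; have [k Pk|P0] := pickP P; last by rewrite big1 // => k _; rewrite P0.
  rewrite (bigD1 k) //= Pk big1 ?addr0 // => l /negbTE lk.
  by case: ifP => // Pl; rewrite (P1 _ _ Pl Pk) eqxx in lk.
have one_elt (A : {set node N}) i j : (#|A| <= 1)%N -> i \in A -> j \in A -> i = j.
  by move=> /card_le1P A1 iA jA; move: (A1 i iA j); rewrite jA => /esym/eqP.
split=> [k|k|||k]; rewrite ?activityE.
- by apply: sumr_ge0 => s _; case: ifP.
- by apply: sumr_ge0 => s _; case: ifP.
- under eq_bigr do rewrite activityE.
  rewrite exchange_big /= -lam_sum1; apply: ler_sum => s valid_s.
  apply: at_most_one => k l /andP [kst _] /andP [lst _].
  have [st1 _ _] := valid_stateP src valid_s.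
  by apply/eqP; rewrite -relay_eq (one_elt _ _ _ st1 kst lst).
- under eq_bigr do rewrite activityE.
  rewrite exchange_big /= -lam_sum1; apply: ler_sum => s valid_s.
  apply: at_most_one => k l /andP [_ ksr] /andP [_ lsr].
  have [_ sr1 _] := valid_stateP dst valid_s.
  by apply/eqP; rewrite -relay_eq (one_elt _ _ _ sr1 ksr lsr).
- rewrite -big_split /= -lam_sum1; apply: ler_sum => s valid_s.
  have [_ _ /(_ (relay_is_relay k)) half_duplex] := valid_stateP (relay k) valid_s.
  case: (boolP (active s src (relay k))) => [/andP [_ rcv]|_];
    case: (boolP (active s (relay k) dst)) => [/andP [snd _]|_];
    rewrite ?addr0 ?add0r ?lexx ?lam_ge0 //.
  have /card_gt0P st_pos : exists x, x \in st s (relay k) by exists dst.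
  have /card_gt0P sr_pos : exists x, x \in sr s (relay k) by exists src.
  by move: (leq_add st_pos sr_pos) => /leq_trans /(_ half_duplex).
Qed.

Definition schedule_prob (mu : option 'I_N -> option 'I_N -> R) (s : state N) : R :=
  \sum_a \sum_b (if diamond_state a b == s then mu a b else 0).

Lemma sum_schedule_prob mu (P : pred (state N)) :
  \sum_(s | P s) schedule_prob mu s =
  \sum_a \sum_b (if P (diamond_state a b) then mu a b else 0).
Proof.
rewrite exchange_big; apply: eq_bigr => a _; rewrite exchange_big; apply: eq_bigr => b _.
rewrite big_mkcond (bigD1 (diamond_state a b)) //= eqxx big1 ?addr0.
  by case: (P _).
by move=> s /negbTE; rewrite eq_sym => ->; case: (P s).
Qed.

Section ZeroDiagonalSchedule.

Variable mu : option 'I_N -> option 'I_N -> R.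
Hypotheses (mu_ge0 : forall a b, 0 <= mu a b) (mu_diag : forall k, mu (Some k) (Some k) = 0).
Hypothesis mu_sum1 : \sum_a \sum_b mu a b = 1.

Lemma invalid_schedule_null a b (P : bool) :
  (if valid_state (diamond_state a b) && P then mu a b else 0) = (if P then mu a b else 0).
Proof.
have [ab|] := boolP ((a == None) || (a != b)); first by rewrite diamond_state_valid.
by case: a => [k|] //=; rewrite negbK => /eqP <-; rewrite mu_diag; case: ifP; case: ifP.
Qed.

Lemma schedule_prob_vec : prob_vec (schedule_prob mu).
Proof.
split=> [s|]; first by do 2![apply: sumr_ge0 => ? _]; case: ifP.
rewrite sum_schedule_prob -mu_sum1; apply: eq_bigr => a _; apply: eq_bigr => b _.
by rewrite -[valid_state _]andbT invalid_schedule_null.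
Qed.

Lemma link_activity_schedule_src k :
  link_activity (schedule_prob mu) src (relay k) = \sum_b mu (Some k) b.
Proof.
rewrite /link_activity sum_schedule_prob (bigD1 (Some k)) //= [X in _ + X]big1 ?addr0.
  by apply: eq_bigr => b _; rewrite active_src_relay invalid_schedule_null eqxx.
move=> a ak; apply: big1 => b _.
by rewrite active_src_relay invalid_schedule_null (negbTE ak).
Qed.

Lemma link_activity_schedule_dst k :
  link_activity (schedule_prob mu) (relay k) dst = \sum_a mu a (Some k).
Proof.
rewrite /link_activity sum_schedule_prob; apply: eq_bigr => a _.
rewrite (bigD1 (Some k)) //= [X in _ + X]big1 ?addr0.
  by rewrite active_relay_dst invalid_schedule_null eqxx.
by move=> b bk; rewrite active_relay_dst invalid_schedule_null (negbTE bk).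
Qed.

End ZeroDiagonalSchedule.

End Diamond.

Section RateProgram.

Variables (R : realFieldType) (N : nat) (lcap rcap : 'I_N -> R).
Hypotheses (lcap_gt0 : forall k, 0 < lcap k) (rcap_gt0 : forall k, 0 < rcap k).

Definition rate_feasible (t : 'I_N -> R) :=
  [/\ forall k, 0 <= t k, \sum_k t k / lcap k <= 1, \sum_k t k / rcap k <= 1 &
      forall k, t k / lcap k + t k / rcap k <= 1].

Lemma lp_valuesE c : lp_values lcap rcap c <-> exists2 t, rate_feasible t & c = \sum_k t k.
Proof.
have lK k : lcap k != 0 by rewrite lt0r_neq0.
have rK k : rcap k != 0 by rewrite lt0r_neq0.
split.
- move=> [xl [xr [[xlr [sl [sr [sum1 ge0]]]] ->]]].
  have xrE k : xl k * lcap k / rcap k = xr k by rewrite xlr mulfK.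
  exists (fun k => xl k * lcap k) => //; split=> [k||| k]; rewrite ?xrE.
  + by rewrite mulr_ge0 ?(proj1 (ge0 k)) ?ltW.
  + by under eq_bigr do rewrite mulfK //.
  + by under eq_bigr do rewrite xrE.
  + by rewrite mulfK.
- move=> [t [t_ge0 sl sr sum1] ->]; exists (fun k => t k / lcap k), (fun k => t k / rcap k).
  split; last by apply: eq_bigr => k _; rewrite divfK.
  split=> [k|]; first by rewrite !divfK.
  by do !split => //; rewrite divr_ge0 ?t_ge0 ?ltW.
Qed.

Definition rate_row (c : (bool * 'I_N) + bool) : 'I_N -> R :=
  match c with
  | inl (true, i) => fun k => if k == i then (lcap i)^-1 + (rcap i)^-1 else 0
  | inl (false, i) => fun k => if k == i then -1 else 0
  | inr true => fun k => (lcap k)^-1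
  | inr false => fun k => (rcap k)^-1
  end.

Definition rate_bound (c : (bool * 'I_N) + bool) : R := if c is inl (false, _) then 0 else 1.

Lemma dot_delta (i : 'I_N) (v : R) (t : 'I_N -> R) :
  dot (fun k => if k == i then v else 0) t = v * t i.
Proof. by rewrite /dot (bigD1 i) //= eqxx big1 ?addr0 // => k /negbTE ->; rewrite mul0r. Qed.

Lemma dot_inv (g t : 'I_N -> R) : dot (fun k => (g k)^-1) t = \sum_k t k / g k.
Proof. by apply: eq_bigr => k _; rewrite mulrC. Qed.

Lemma rate_feasibleE t : rate_feasible t <-> feasible rate_row rate_bound t.
Proof.
split.
- move=> [t_ge0 sl sr sum1] [[[] i]|[]] /=; rewrite ?dot_delta ?dot_inv //.
    by rewrite mulrDl !(mulrC _ (t i)).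
  by rewrite mulN1r oppr_le0.
- move=> feas; split=> [k|||k].
  + by have := feas (inl (false, k)); rewrite /= dot_delta mulN1r oppr_le0.
  + by have := feas (inr true); rewrite /= dot_inv.
  + by have := feas (inr false); rewrite /= dot_inv.
  + by have := feas (inl (true, k)); rewrite /= dot_delta mulrDl !(mulrC _ (t k)).
Qed.

Lemma rate_program_bounded e :
  (forall c, dot (rate_row c) e <= 0) -> forall k, e k = 0.
Proof.
move=> rec k; have := rec (inl (false, k)); have := rec (inl (true, k)).
rewrite /= !dot_delta pmulr_rle0 ?addr_gt0 ?invr_gt0 //; lra.
Qed.

Lemma rate_optimum_exists :
  exists2 t, rate_feasible t & forall t', rate_feasible t' -> \sum_k t' k <= \sum_k t k.
Proof.
have sumE (t : 'I_N -> R) : dot (fun=> 1) t = \sum_k t k.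
  by apply: eq_bigr => k _; rewrite mul1r.
have feas0 : rate_feasible (fun=> 0).
  by split=> [k|||k]; rewrite ?big1 ?mul0r ?addr0 ?ler01 // => k _; rewrite mul0r.
have [t /rate_feasibleE tf tmax] :=
  lp_optimum_exists (fun=> 1) rate_program_bounded (proj1 (rate_feasibleE _) feas0).
by exists t => // t' /rate_feasibleE /tmax; rewrite !sumE.
Qed.

End RateProgram.

Section CutSetBound.

Variables (R : realFieldType) (N : nat) (lcap rcap : 'I_N -> R).
Hypotheses (lcap_gt0 : forall k, 0 < lcap k) (rcap_gt0 : forall k, 0 < rcap k).

Lemma rate_cs_value t : rate_feasible lcap rcap t -> cs_values lcap rcap (\sum_k t k).
Proof.
move=> [t_ge0 sl sr sum1].
have ge0 g k : (forall k, 0 < g k) -> 0 <= t k / g k by move=> g_gt0; rewrite divr_ge0 ?t_ge0 ?ltW.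
have [mu [mu_ge0 mu_diag mu_sum1 mu_marg]] :=
  @zero_diagonal_coupling _ _ (fun k => t k / lcap k) (fun k => t k / rcap k)
    (ge0 _ ^~ lcap_gt0) (ge0 _ ^~ rcap_gt0) sl sr sum1.
have cutE Om : is_cut Om -> cut_value lcap rcap (schedule_prob mu) Om = \sum_k t k.
  move=> cutOm; rewrite cut_value_diamond //; apply: eq_bigr => k _.
  rewrite link_activity_schedule_src // link_activity_schedule_dst //.
  by have [-> ->] := mu_marg k; case: ifP; rewrite divfK ?lt0r_neq0.
exists (schedule_prob mu); split; first exact: schedule_prob_vec.
split=> [|Om /cutE -> //]; exists [set src].
by rewrite cutE /is_cut !inE ?eqxx ?dst_eq_src.
Qed.

Lemma cs_value_le_rate c :
  cs_values lcap rcap c -> exists2 t, rate_feasible lcap rcap t & c <= \sum_k t k.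
Proof.
move=> [lam [lam_prob [_ min_c]]].
have [X_ge0 Y_ge0 sumX sumY XY] := link_activity_feasible lam_prob.
pose X k := link_activity lam src (relay k); pose Y k := link_activity lam (relay k) dst.
pose t k := Num.min (X k * lcap k) (Y k * rcap k).
pose Om := src |: [set relay k | k in [set k | ~~ (X k * lcap k < Y k * rcap k)]].
have cutOm : is_cut Om.
  by rewrite /is_cut !inE eqxx /=; apply/imsetP => -[k _ /eqP]; rewrite eq_sym relay_eq_dst.
have tX k : t k / lcap k <= X k by rewrite ler_pdivrMr // ge_min lexx.
have tY k : t k / rcap k <= Y k by rewrite ler_pdivrMr // ge_min lexx orbT.
exists t.
  split=> [k|||k].
  - by rewrite le_min; apply/andP; split; apply: mulr_ge0; rewrite ?X_ge0 ?Y_ge0 ?ltW.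
  - by apply: le_trans sumX; apply: ler_sum => k _.
  - by apply: le_trans sumY; apply: ler_sum => k _.
  - by apply: le_trans (XY k); apply: lerD.
apply: le_trans (min_c _ cutOm) _; rewrite cut_value_diamond // le_eqVlt; apply/orP; left.
apply/eqP/eq_bigr => k _; rewrite !inE relay_eq_src (mem_imset _ _ (@relay_inj N)) inE /t.
by case: ltP => [/ltW/min_l|/min_r].
Qed.

End CutSetBound.

Theorem mainTheorem6 (R : realFieldType) (N : nat) (lcap rcap : 'I_N -> R)
  (hl : forall i, 0 < lcap i) (hr : forall i, 0 < rcap i) :
  exists c : R, is_max (cs_values lcap rcap) c /\ is_max (lp_values lcap rcap) c.
Proof.
have [t tf tmax] := rate_optimum_exists hl hr.
exists (\sum_k t k); split; split.
- exact: rate_cs_value.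
- by move=> c /(cs_value_le_rate hl hr) [t' /tmax t't ct']; apply: le_trans t't.
- by apply/lp_valuesE => //; exists t.
- by move=> c /(lp_valuesE hl hr) [t' /tmax t't ->].
Qed.
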